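(* Consider an instance of the Nash equilibrium complementarity problem (NECP) that satisfies the dominance condition, and the corresponding instance of the tropical Nash equilibrium complementarity problem (TNECP) obtained by the logarithmic image, i.e. $M^-=\log(-M)$ and $q^+=\log q$ (entrywise, with $\log 0=-\infty$). Then the solutions of the two problems have the same supports.
   Context: NECP: given a square real matrix $M$ whose columns are nonpositive with at least one negative entry, and a vector $q$ with positive entries, find $(w,z)$ with $w=Mz+q$, $w^\top z=0$, $z\neq 0$, $w,z\geq 0$. TNECP over the max-plus semifield $\mathbb{T}=\mathbb{R}\cup\{-\infty\}$ ($\oplus=\max$, $\odot=+$): find $(w,z)\in\mathbb{T}^n\times\mathbb{T}^n$ with $w\oplus M^-\odot z=q^+$, $w^\top\odot z=-\infty$, $z\neq-\infty$. The support of a vector is the set of indices of its nonzero entries (classical) or non-$(-\infty)$ entries (tropical). Dominance condition: for a system $Ax=b$, $x\geq 0$ with $A\geq 0$ having a nonzero entry in every column and $b>0$, the normalized matrix is $(\operatorname{diag} b)^{-1}A(\operatorname{diag} u)^{-1}$ where $u_j$ is the largest entry of the $j$th column of $(\operatorname{diag} b)^{-1}A$; it is columnwise normal (entries in $[0,1]$, each column has a $1$-entry). A columnwise normal matrix with $n$ rows satisfies the dominance condition if (a) some $n\times n$ submatrix covers a permutation matrix (i.e. the difference is entrywise nonnegative), and (b) every $n\times n$ submatrix covering a permutation matrix has all row sums less than $2$. The NECP instance satisfies the dominance condition if the normalized matrix of the system $(I\ \ -M)\binom{w}{z}=q$ does. *)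

From HB Require Import structures.
From mathcomp Require Import all_boot all_order all_algebra all_fingroup.
From mathcomp Require Import all_classical all_reals all_analysis.
Set Implicit Arguments. Unset Strict Implicit. Unset Printing Implicit Defensive.
Import Order.TTheory GRing.Theory Num.Theory.
Local Open Scope ring_scope.

Section Defs.
Variable R : realType.

Definition supp n (v : 'cV[R]_n) : {set 'I_n} := [set i | v i 0 != 0].

Definition NECP_sol n (M : 'M[R]_n) (q w z : 'cV[R]_n) : Prop :=
  [/\ w = M *m z + q,
      \sum_(i < n) w i 0 * z i 0 = 0,
      z != 0,
      forall i, 0 <= w i 0 &
      forall i, 0 <= z i 0].

Definition col_scale n m (A : 'M[R]_(n, m)) (b : 'I_n -> R) (j : 'I_m) : R :=
  \big[Num.max/0]_(i < n) (A i j / b i).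

Definition normalized n m (A : 'M[R]_(n, m)) (b : 'I_n -> R) : 'M[R]_(n, m) :=
  \matrix_(i, j) (A i j / (b i * col_scale A b j)).

Definition covers_perm n (B : 'M[R]_n) : Prop :=
  exists s : 'S_n, forall i j, 0 <= B i j - perm_mx s i j.

(* dominance condition of a columnwise normal matrix N with n rows;
   n x n submatrices are given by injective column selections f *)
Definition dominance_mx n m (N : 'M[R]_(n, m)) : Prop :=
  (exists f : 'I_n -> 'I_m, injective f /\ covers_perm (colsub f N)) /\
  (forall f : 'I_n -> 'I_m, injective f -> covers_perm (colsub f N) ->
     forall i, \sum_(k < n) colsub f N i k < 2).

(* the NECP instance (M,q) satisfies the dominance condition:
   the normalized matrix of (I  -M)(w;z) = q does *)
Definition NECP_dominance n (M : 'M[R]_n) (q : 'cV[R]_n) : Prop :=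
  dominance_mx (normalized (row_mx 1%:M (- M)) (fun i => q i 0)).

Definition Tlog (x : R) : \bar R := if x == 0 then -oo%E else (ln x)%:E.

Definition tsupp n (v : 'I_n -> \bar R) : {set 'I_n} := [set i | v i != -oo%E].

(* (w,z) solves TNECP(Mm,qp) over the max-plus semifield:
   entries in T (not +oo), w (+) Mm (.) z = qp, w^T (.) z = -oo, z <> -oo *)
Definition TNECP_sol n (Mm : 'I_n -> 'I_n -> \bar R) (qp w z : 'I_n -> \bar R)
  : Prop :=
  [/\ forall i, w i != +oo%E /\ z i != +oo%E,
      forall i, maxe (w i) (\big[maxe/-oo%E]_(j < n) (Mm i j + z j)%E) = qp i,
      \big[maxe/-oo%E]_(i < n) (w i + z i)%E = -oo%E &
      exists i, z i != -oo%E].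

End Defs.

(* Both problems are governed by the same condition on a pair of supports (Sw, Sz):
   Sz is nonempty and disjoint from Sw, and every row outside Sw is a maximizing
   row, in the normalized matrix B = (diag q)^-1 (-M) (diag u)^-1 (u_j the largest
   entry of column j of (diag q)^-1 (-M)), of some column of Sz.  For the tropical
   problem this is a direct computation, Tlog being an isomorphism from the
   semifield (R_{>=0}, max, times) onto T.  For the classical problem, the
   dominance condition forbids two maximizing rows in a column, so an admissible
   Sz is the complement of Sw and is matched to it by a permutation; the
   corresponding square system has unit entries along that permutation and
   off-diagonal row sums below 1, hence a positive solution, which yields z.
   Conversely, if a row i with w_i = 0 maximized no column of supp z, grouping
   the columns of supp z by a maximizing row would give a square submatrix of
   [I | B] covering a permutation whose i-th row sum is at least 2. *)

From HB Require Import structures.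
From mathcomp Require Import all_boot all_order all_algebra all_fingroup.
From mathcomp Require Import all_classical all_reals all_analysis.
From mathcomp Require Import ring lra.
Set Implicit Arguments. Unset Strict Implicit. Unset Printing Implicit Defensive.
Import Order.TTheory GRing.Theory Num.Theory.
Local Open Scope ring_scope.

Lemma exists_argmax d (T : finType) (U : orderType d) (f : T -> U) (t0 : T) :
  exists k, forall t, (f t <= f k)%O.
Proof.
exists [arg max_(k > t0) f k]%O.
by case: arg_maxP => // k _ k_max t; apply: k_max.
Qed.

Lemma fiber_argmax d (T U : finType) (V : orderType d) (S : {set T}) (r : T -> U)
    (F : T -> V) (t0 : T) :
  exists g : U -> T, forall k, k \in r @: S ->
    [/\ g k \in S, r (g k) = k & forall j, j \in S -> r j = k -> (F j <= F (g k))%O].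
Proof.
suff /fin_all_exists : forall k, exists j : T, k \in r @: S ->
    [/\ j \in S, r j = k & forall j', j' \in S -> r j' = k -> (F j' <= F j)%O] by [].
move=> k.
case: (boolP (k \in r @: S)) => [/imsetP[j0 j0S ->]|_]; last by exists t0.
exists [arg max_(j > j0 | (j \in S) && (r j == r j0)) F j]%O => _.
case: arg_maxP => [|j /andP[jS /eqP rj] j_max]; first by rewrite j0S eqxx.
by split=> // j' j'S rj'; apply: j_max; rewrite j'S rj' eqxx.
Qed.

Section PermDominant.
Variables (R : realFieldType) (n : nat) (A : 'M[R]_n) (s : 'S_n).
Hypothesis A_ge0 : forall i j, 0 <= A i j.
Hypothesis A_perm1 : forall i, A i (s i) = 1.
Hypothesis A_offdiag_lt1 : forall i, \sum_(j | j != s i) A i j < 1.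

Lemma mulmx_perm_diag (x : 'cV[R]_n) i :
  (A *m x) i 0 = x (s i) 0 + \sum_(j | j != s i) A i j * x j 0.
Proof. by rewrite mxE (bigD1 (s i)) //= A_perm1 mul1r. Qed.

Lemma offdiag_sum_le (f : 'I_n -> R) i m : (forall j, f j <= m) ->
  \sum_(j | j != s i) A i j * f j <= (\sum_(j | j != s i) A i j) * m.
Proof. by move=> f_le; rewrite mulr_suml; apply: ler_sum => j _; rewrite ler_wpM2l. Qed.

Lemma perm_dominant_mulmx_eq0 (v : 'cV[R]_n) : A *m v = 0 -> v = 0.
Proof.
move=> Av0; apply/matrixP => j0 o; rewrite (ord1 o) mxE; apply/eqP.
have [k v_max] := exists_argmax (fun j => `|v j 0|) j0.
set i := (s^-1)%g k; have sik : s i = k by rewrite permKV.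
have vk : v k 0 = - \sum_(j | j != s i) A i j * v j 0.
  by apply/eqP; rewrite -addr_eq0 -{1}sik -mulmx_perm_diag Av0 mxE.
have : `|v k 0| <= (\sum_(j | j != s i) A i j) * `|v k 0|.
  rewrite {1}vk normrN; apply: (le_trans (ler_norm_sum _ _ _)).
  apply: le_trans (offdiag_sum_le (f := fun j => `|v j 0|) i v_max).
  by apply: ler_sum => j _; rewrite normrM ger0_norm.
have := A_offdiag_lt1 i; rewrite -normr_le0 => c_lt1 vk_le.
have := v_max j0; have := normr_ge0 (v k 0); nra.
Qed.

Lemma perm_dominant_unitmx : A \in unitmx.
Proof.
rewrite unitmxE unitfE -det_tr; apply/det0P => -[v /eqP v_neq0 vA0]; apply: v_neq0.
rewrite -[v]trmxK (@perm_dominant_mulmx_eq0 v^T) ?trmx0 //.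
by rewrite -[A]trmxK -trmx_mul vA0 trmx0.
Qed.

(* With x minimal at a and maximal at b, the rows s^-1 a and s^-1 b give
   x_a >= 1 - c_a x_b and x_b <= 1 - c_b x_a, which forces x_a > 0 as c_a c_b < 1. *)
Lemma perm_dominant_sol_gt0 (x : 'cV[R]_n) :
  A *m x = const_mx 1 -> forall i, 0 < x i 0.
Proof.
move=> Ax1 i0.
have row1 i : x (s i) 0 + \sum_(j | j != s i) A i j * x j 0 = 1.
  by rewrite -mulmx_perm_diag Ax1 mxE.
have [a x_min] := exists_argmax (fun j => - x j 0) i0.
have [b x_max] := exists_argmax (fun j => x j 0) i0.
have [ia ?] : exists ia, s ia = a by exists ((s^-1)%g a); rewrite permKV.
have [ib ?] : exists ib, s ib = b by exists ((s^-1)%g b); rewrite permKV.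
subst a b; pose c i := \sum_(j | j != s i) A i j.
have c_ge0 i : 0 <= c i by apply: sumr_ge0.
have row_a : 1 <= x (s ia) 0 + c ia * x (s ib) 0.
  by rewrite -(row1 ia) lerD2l offdiag_sum_le.
have row_b : x (s ib) 0 + c ib * x (s ia) 0 <= 1.
  rewrite -(row1 ib) lerD2l mulr_suml; apply: ler_sum => j _.
  by rewrite ler_wpM2l // -lerN2.
have := A_offdiag_lt1 ia; have := A_offdiag_lt1 ib; rewrite -/(c ia) -/(c ib).
move=> cb_lt1 ca_lt1; have := c_ge0 ia; have := c_ge0 ib => cb_ge0 ca_ge0.
have := x_min i0; rewrite lerN2 => xa_le.
have : c ia * x (s ib) 0 <= c ia * (1 - c ib * x (s ia) 0) by rewrite ler_wpM2l //; lra.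
have : c ia * c ib < 1 by nra.
nra.
Qed.

End PermDominant.

Section Dominance.
Variable R : realType.

Lemma dominance_rowsum_lt2 n m (N : 'M[R]_(n, m)) (f : 'I_n -> 'I_m) (s : 'S_n) :
  dominance_mx N -> injective f -> (forall i j, 0 <= N i j) ->
  (forall i, N i (f (s i)) = 1) -> forall i, \sum_k N i (f k) < 2.
Proof.
move=> [_ dom] f_inj N_ge0 N_perm1 i.
have cover : covers_perm (colsub f N).
  exists s => i' k; rewrite !mxE; case: eqP => [<-|_].
    by rewrite N_perm1 subrr.
  by rewrite subr0.
by have := dom f f_inj cover i; under eq_bigr do rewrite mxE.
Qed.

Lemma normalized_row_mx n m1 m2 (A1 : 'M[R]_(n, m1)) (A2 : 'M[R]_(n, m2)) b :
  normalized (row_mx A1 A2) b = row_mx (normalized A1 b) (normalized A2 b).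
Proof.
rewrite -[LHS]hsubmxK; congr row_mx; apply/matrixP => i j;
  rewrite mxE [LHS]mxE [RHS]mxE /col_scale.
- by rewrite row_mxEl; under eq_bigr do rewrite row_mxEl.
- by rewrite row_mxEr; under eq_bigr do rewrite row_mxEr.
Qed.

Lemma normalized_scalar1 n (b : 'I_n -> R) :
  (forall i, 0 < b i) -> normalized 1%:M b = 1%:M.
Proof.
move=> b_gt0; apply/matrixP => i j; rewrite !mxE /col_scale.
have -> : \big[Num.max/0]_k ((1%:M : 'M[R]_n) k j / b k) = (b j)^-1.
  apply/le_anti/andP; split; last by apply: (bigmax_sup j) => //; rewrite mxE eqxx mul1r.
  apply: bigmax_le => [|k _]; first by rewrite invr_ge0 ltW.
  by rewrite mxE; case: eqP => [->|_]; rewrite ?mul1r // mul0r invr_ge0 ltW.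
by case: eqP => [->|_]; rewrite ?mul0r // mul1r divff ?invr1 // gt_eqF.
Qed.

End Dominance.

Section MaxTimes.
Variable R : realType.

Definition maxtimes_sol n (A : 'M[R]_n) (b w z : 'cV[R]_n) : Prop :=
  [/\ forall i, 0 <= w i 0 /\ 0 <= z i 0,
      forall i, Num.max (w i 0) (\big[Num.max/0]_j (A i j * z j 0)) = b i 0,
      \big[Num.max/0]_i (w i 0 * z i 0) = 0 &
      exists j, z j 0 != 0].

Lemma Tlog_eqNy (x : R) : (Tlog x == -oo%E) = (x == 0).
Proof. by rewrite /Tlog; case: (x == 0). Qed.

Lemma Tlog_neqy (x : R) : Tlog x != +oo%E.
Proof. by rewrite /Tlog; case: (x == 0). Qed.

Lemma TlogM (x y : R) : 0 <= x -> 0 <= y -> Tlog (x * y) = (Tlog x + Tlog y)%E.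
Proof.
rewrite le0r => /predU1P[-> _|x_gt0]; first by rewrite mul0r /Tlog eqxx addNye.
rewrite le0r => /predU1P[->|y_gt0]; first by rewrite mulr0 /Tlog eqxx addeNy.
by rewrite /Tlog !gt_eqF ?mulr_gt0 // lnM ?posrE.
Qed.

Lemma Tlog_le (x y : R) : 0 <= x -> 0 <= y -> (Tlog x <= Tlog y)%E = (x <= y).
Proof.
rewrite le0r => /predU1P[-> y_ge0|x_gt0]; first by rewrite /Tlog eqxx leNye y_ge0.
rewrite le0r => /predU1P[->|y_gt0]; first by rewrite /Tlog eqxx gt_eqF // leeNy_eq leNgt x_gt0.
by rewrite /Tlog !gt_eqF // lee_fin ler_ln ?posrE.
Qed.

Lemma Tlog_inj : {in Num.nneg &, injective (@Tlog R)}.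
Proof.
move=> x y; rewrite !nnegrE => x_ge0 y_ge0 xy.
by apply/le_anti; rewrite -(Tlog_le x_ge0 y_ge0) -(Tlog_le y_ge0 x_ge0) xy lexx.
Qed.

Lemma Tlog_max (x y : R) : 0 <= x -> 0 <= y ->
  Tlog (Num.max x y) = maxe (Tlog x) (Tlog y).
Proof. by move=> x_ge0 y_ge0; rewrite !maxEle Tlog_le //; case: ifP. Qed.

Lemma Tlog_bigmax (I : finType) (F : I -> R) : (forall i, 0 <= F i) ->
  Tlog (\big[Num.max/0]_i F i) = \big[maxe/-oo%E]_i Tlog (F i).
Proof.
move=> F_ge0.
suff [] : 0 <= \big[Num.max/0]_i F i /\
    Tlog (\big[Num.max/0]_i F i) = \big[maxe/-oo%E]_i Tlog (F i) by [].
apply: (big_ind2 (fun x y => 0 <= x /\ Tlog x = y)) => [|x1 y1 x2 y2|i _].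
- by rewrite /Tlog eqxx.
- by move=> [x1_ge0 <-] [x2_ge0 <-]; rewrite le_max x1_ge0 Tlog_max.
- by rewrite F_ge0.
Qed.

Definition Texp (x : \bar R) : R := if x is r%:E then expR r else 0.

Lemma Texp_ge0 x : 0 <= Texp x.
Proof. by case: x => [r||] //=; apply: ltW (expR_gt0 r). Qed.

Lemma TexpK x : x != +oo%E -> Tlog (Texp x) = x.
Proof. by case: x => [r||] //= _; rewrite /Tlog ?eqxx // gt_eqF ?expR_gt0 // expRK. Qed.

Lemma TNECP_sol_Tlog n (A : 'M[R]_n) (b w z : 'cV[R]_n) :
  (forall i j, 0 <= A i j) -> (forall i, 0 <= b i 0) ->
  (forall i, 0 <= w i 0 /\ 0 <= z i 0) ->
  TNECP_sol (fun i j => Tlog (A i j)) (fun i => Tlog (b i 0))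
    (fun i => Tlog (w i 0)) (fun i => Tlog (z i 0)) <-> maxtimes_sol A b w z.
Proof.
move=> A_ge0 b_ge0 wz_ge0.
have w_ge0 i := (wz_ge0 i).1; have z_ge0 i := (wz_ge0 i).2.
have rowE i : maxe (Tlog (w i 0)) (\big[maxe/-oo%E]_j (Tlog (A i j) + Tlog (z j 0%R))%E) =
    Tlog (Num.max (w i 0) (\big[Num.max/0]_j (A i j * z j 0))).
  rewrite Tlog_max ?bigmax_ge_id // Tlog_bigmax => [|j]; last by rewrite mulr_ge0.
  by congr maxe; apply: eq_bigr => j _; rewrite TlogM.
have compE : \big[maxe/-oo%E]_i (Tlog (w i 0%R) + Tlog (z i 0%R))%E =
    Tlog (\big[Num.max/0]_i (w i 0 * z i 0)).
  rewrite Tlog_bigmax => [|i]; last by rewrite mulr_ge0.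
  by apply: eq_bigr => i _; rewrite TlogM.
split=> -[_ rows comp [j zj]]; split=> //.
- move=> i; apply: Tlog_inj; rewrite ?nnegrE ?le_max ?w_ge0 //.
  by rewrite -rowE; apply: rows.
- by apply/eqP; rewrite -Tlog_eqNy -compE comp.
- by exists j; rewrite -Tlog_eqNy.
- by move=> i; rewrite !Tlog_neqy.
- by move=> i; rewrite rowE rows.
- by rewrite compE comp /Tlog eqxx.
- by exists j; rewrite Tlog_eqNy.
Qed.

Lemma TNECP_supports_maxtimes n (A : 'M[R]_n) (b : 'cV[R]_n) Sw Sz :
  (forall i j, 0 <= A i j) -> (forall i, 0 <= b i 0) ->
  (exists w z : 'I_n -> \bar R,
      TNECP_sol (fun i j => Tlog (A i j)) (fun i => Tlog (b i 0)) w z /\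
      tsupp w = Sw /\ tsupp z = Sz) <->
  (exists w z : 'cV[R]_n, maxtimes_sol A b w z /\ supp w = Sw /\ supp z = Sz).
Proof.
move=> A_ge0 b_ge0.
have tsupp_Tlog (v : 'cV[R]_n) : tsupp (fun i => Tlog (v i 0)) = supp v.
  by apply/setP => i; rewrite !inE Tlog_eqNy.
split=> -[w [z [sol [<- <-]]]].
  have [w_fin _ _ _] := sol.
  pose w' := \col_i Texp (w i); pose z' := \col_i Texp (z i).
  have Tlog_w' : (fun i => Tlog (w' i 0)) = w.
    by apply/funext => i; rewrite mxE TexpK // (w_fin i).1.
  have Tlog_z' : (fun i => Tlog (z' i 0)) = z.
    by apply/funext => i; rewrite mxE TexpK // (w_fin i).2.
  exists w', z'; rewrite -(tsupp_Tlog w') -(tsupp_Tlog z') Tlog_w' Tlog_z'.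
  split=> //; apply/TNECP_sol_Tlog => //; last by rewrite Tlog_w' Tlog_z'.
  by move=> i; rewrite !mxE !Texp_ge0.
exists (fun i => Tlog (w i 0)), (fun i => Tlog (z i 0)); rewrite !tsupp_Tlog.
by split=> //; apply/TNECP_sol_Tlog => //; case: sol.
Qed.

End MaxTimes.

Section NECPInstance.
Variables (R : realType) (n : nat) (M : 'M[R]_n) (q : 'cV[R]_n).
Hypothesis M_le0 : forall i j, M i j <= 0.
Hypothesis M_col_neg : forall j, exists i, M i j < 0.
Hypothesis q_gt0 : forall i, 0 < q i 0.
Hypothesis M_q_dominance : NECP_dominance M q.

Let a i j := - M i j / q i 0.
Let u j := \big[Num.max/0]_i a i j.
Let B i j := a i j / u j.

Lemma a_ge0 i j : 0 <= a i j.
Proof. by rewrite divr_ge0 ?oppr_ge0 // ltW. Qed.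

Lemma a_le_u i j : a i j <= u j.
Proof. exact: (le_bigmax _ (fun i => a i j)). Qed.

Lemma u_gt0 j : 0 < u j.
Proof.
have [i Mij_lt0] := M_col_neg j; apply: lt_le_trans (a_le_u i j).
by rewrite divr_gt0 // oppr_gt0.
Qed.

Lemma B_ge0 i j : 0 <= B i j.
Proof. by rewrite divr_ge0 ?a_ge0 // ltW ?u_gt0. Qed.

Lemma B_le1 i j : B i j <= 1.
Proof. by rewrite ler_pdivrMr ?u_gt0 // mul1r a_le_u. Qed.

Lemma B_eq1 i j : (B i j == 1) = (a i j == u j).
Proof.
rewrite /B -[X in _ == X](divff (lt0r_neq0 (u_gt0 j))) (inj_eq (mulIf _)) //.
by rewrite invr_eq0 gt_eqF ?u_gt0.
Qed.

Lemma exists_B_eq1 j : exists i, B i j = 1.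
Proof.
have [i _ uE] := eq_bigmax j xpredT (fun i => a i j) erefl (fun i _ => a_ge0 i j).
by exists i; apply/eqP; rewrite B_eq1 /u uE.
Qed.

Lemma normalized_NECP :
  normalized (row_mx 1%:M (- M)) (fun i => q i 0) = row_mx 1%:M (\matrix_(i, j) B i j).
Proof.
rewrite normalized_row_mx normalized_scalar1 //; congr row_mx.
apply/matrixP => i j; rewrite !mxE /col_scale invfM mulrA.
by congr (_ / _); apply: eq_bigr => k _; rewrite mxE.
Qed.

Definition mixed_submx (K : {set 'I_n}) (g : 'I_n -> 'I_n) : 'M[R]_n :=
  \matrix_(i, k) (if k \in K then B i (g k) else (i == k)%:R).

Lemma mixed_submx_mulmx K g (x : 'I_n -> R) i :
  \sum_k mixed_submx K g i k * x k = \sum_(k in K) B i (g k) * x k + (i \notin K)%:R * x i.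
Proof.
rewrite (bigID (mem K)) /=; congr (_ + _).
  by apply: eq_bigr => k kK; rewrite mxE kK.
under eq_bigr => k kK do rewrite mxE (negbTE kK).
case: (boolP (i \in K)) => iK /=.
  rewrite mul0r big1 // => k kK; case: eqP => [ik|_]; last by rewrite mul0r.
  by rewrite -ik iK in kK.
rewrite (bigD1 i) //= eqxx big1 ?addr0 // => k /andP[_ /negbTE].
by rewrite eq_sym => ->; rewrite mul0r.
Qed.

Lemma mixed_submx_rowsum K g i :
  \sum_k mixed_submx K g i k = \sum_(k in K) B i (g k) + (i \notin K)%:R.
Proof.
have := mixed_submx_mulmx K g (fun=> 1) i.
by rewrite mulr1 (eq_bigr _ (fun k _ => mulr1 _)) (eq_bigr _ (fun k _ => mulr1 _)).
Qed.

Lemma mixed_submx_dominance (K : {set 'I_n}) (g : 'I_n -> 'I_n) (s : 'S_n) :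
  {in K &, injective g} -> (forall i, mixed_submx K g i (s i) = 1) ->
  forall i, \sum_k mixed_submx K g i k < 2.
Proof.
move=> g_inj mixed_perm1 i.
pose f k := if k \in K then rshift n (g k) else lshift n k.
pose N := row_mx 1%:M (\matrix_(i, j) B i j) : 'M[R]_(n, n + n).
have mixedE i' k : mixed_submx K g i' k = N i' (f k).
  by rewrite /f [LHS]mxE; case: ifP => _; rewrite ?row_mxEr ?row_mxEl mxE.
have f_inj : injective f.
  move=> k1 k2; rewrite /f.
  case: (boolP (k1 \in K)) => k1K; case: (boolP (k2 \in K)) => k2K.
  - by move/rshift_inj; apply: g_inj.
  - by move/eqP; rewrite eq_rlshift.
  - by move/eqP; rewrite eq_lrshift.
  - exact: lshift_inj.
have N_ge0 i' j : 0 <= N i' j.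
  by rewrite mxE; case: (fintype.split j) => k; rewrite mxE ?ler0n ?B_ge0.
under eq_bigr do rewrite mixedE.
apply: (dominance_rowsum_lt2 (s := s)) => //; first by rewrite /N -normalized_NECP.
by move=> i'; rewrite -mixedE.
Qed.

Lemma top_row_unique i i' j : B i j = 1 -> B i' j = 1 -> i = i'.
Proof.
move=> Bij Bi'j; apply/eqP/contraT => ii'.
have const_inj : {in [set i] &, injective (fun=> j)}.
  by move=> k1 k2; rewrite !inE => /eqP-> /eqP->.
have mixed_perm1 k : mixed_submx [set i] (fun=> j) k ((1 : 'S_n)%g k) = 1.
  by rewrite perm1 mxE inE; case: eqP => [->|_]; rewrite ?eqxx.
have := mixed_submx_dominance const_inj mixed_perm1 i'.
by rewrite mixed_submx_rowsum big_set1 inE eq_sym (negbTE ii') Bi'j /= ltxx.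
Qed.

Lemma NECP_residual (z : 'cV[R]_n) i :
  (M *m z + q) i 0 = q i 0 * (1 - \sum_j B i j * (u j * z j 0)).
Proof.
rewrite !mxE mulrBr mulr1 addrC mulr_sumr -sumrN; congr (_ + _).
apply: eq_bigr => j _; have := u_gt0 j; have := q_gt0 i => qi_gt0 uj_gt0.
by rewrite /B /a; field; rewrite !gt_eqF.
Qed.

(* Otherwise pick a maximizing row r j of every column j in supp y and, in each
   fibre of r, the column best for row i: dominance at row i, which is not in the
   image of r, contradicts the equality for row i. *)
Lemma tight_row_top (y : 'I_n -> R) i :
  (forall j, 0 <= y j) -> (forall k, \sum_j B k j * y j <= 1) ->
  \sum_j B i j * y j = 1 -> exists2 j, y j != 0 & B i j = 1.
Proof.
move=> y_ge0 rows_le1 row_i; apply: contrapT => no_top.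
have /fin_all_exists[r r_top] := exists_B_eq1.
pose S := [set j | y j != 0]; pose K := r @: S.
have [g g_spec] := fiber_argmax S r (fun j => B i j) i.
have iK : i \notin K.
  apply/imsetP => -[j jS ij]; apply: no_top; exists j; first by rewrite inE in jS.
  by rewrite ij r_top.
have g_inj : {in K &, injective g}.
  by move=> k1 k2 /g_spec[_ r1 _] /g_spec[_ r2 _] g12; rewrite -r1 -r2 g12.
have g_perm1 k : mixed_submx K g k ((1 : 'S_n)%g k) = 1.
  rewrite perm1 mxE; case: ifP => [kK|_]; last by rewrite eqxx.
  by have [_ rk _] := g_spec k kK; rewrite -{1}rk r_top.
have := mixed_submx_dominance g_inj g_perm1 i.
rewrite mixed_submx_rowsum (negbTE iK) /= => dom.
have fiber_le1 k : \sum_(j in S | r j == k) y j <= 1.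
  apply: le_trans (rows_le1 k).
  apply: (@le_trans _ _ (\sum_(j in S | r j == k) B k j * y j)).
    by apply: ler_sum => j /andP[_ /eqP <-]; rewrite r_top mul1r.
  rewrite [leRHS](bigID (fun j => (j \in S) && (r j == k))) /= lerDl.
  by apply: sumr_ge0 => j _; rewrite mulr_ge0 ?B_ge0.
suff : 1 <= \sum_(k in K) B i (g k) by lra.
rewrite -{1}row_i (bigID (fun j => j \in S)) /= [X in _ + X]big1 ?addr0; last first.
  by move=> j; rewrite inE negbK => /eqP ->; rewrite mulr0.
rewrite (partition_big_imset r); apply: ler_sum => k kK.
have [_ _ g_max] := g_spec k kK.
apply: (@le_trans _ _ (B i (g k) * \sum_(j in S | r j == k) y j)).
  rewrite mulr_sumr; apply: ler_sum => j /andP[jS /eqP rj].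
  by rewrite ler_wpM2r ?g_max.
by rewrite -[leRHS]mulr1 ler_wpM2l ?B_ge0.
Qed.

Definition admissible (Sw Sz : {set 'I_n}) : Prop :=
  [/\ exists j, j \in Sz, Sz \subset ~: Sw &
      forall i, i \notin Sw -> exists2 j, j \in Sz & B i j = 1].

Lemma NECP_sol_admissible (w z : 'cV[R]_n) :
  NECP_sol M q w z -> admissible (supp w) (supp z).
Proof.
case=> -> wz z_neq0 w_ge0 z_ge0; split.
- apply/existsP; apply: contraNT z_neq0; rewrite negb_exists => /forallP supp_z0.
  apply/eqP/matrixP => j o; rewrite (ord1 o) mxE; apply/eqP.
  by move: (supp_z0 j); rewrite inE negbK.
- apply/fintype.subsetP => j; rewrite !inE negbK => zj.
  have := psumr_eq0P (fun i _ => mulr_ge0 (w_ge0 i) (z_ge0 i)) wz (i := j) isT.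
  by move/eqP; rewrite mulf_eq0 (negbTE zj) orbF.
move=> i; rewrite inE negbK => /eqP wi0.
have [|||j yj Bij] := @tight_row_top (fun j => u j * z j 0) i.
- by move=> j; rewrite mulr_ge0 ?z_ge0 // ltW ?u_gt0.
- by move=> k; have := w_ge0 k; rewrite NECP_residual pmulr_rge0 ?q_gt0 // subr_ge0.
- by move: wi0; rewrite NECP_residual => /eqP; rewrite mulf_eq0 gt_eqF //= subr_eq0 => /eqP <-.
by exists j; rewrite // inE; apply: contraNneq yj => ->; rewrite mulr0.
Qed.

Lemma admissible_perm Sw Sz : admissible Sw Sz ->
  Sz = ~: Sw /\ exists s : 'S_n, forall i, mixed_submx (~: Sw) id i (s i) = 1.
Proof.
case=> _ Sz_sub top; set T := ~: Sw.
have [sigma sigma_top] : exists sigma : 'I_n -> 'I_n,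
    forall i, i \in T -> sigma i \in Sz /\ B i (sigma i) = 1.
  suff /fin_all_exists : forall i, exists j, i \in T -> j \in Sz /\ B i j = 1 by [].
  move=> i; case: (boolP (i \in T)) => [|_]; last by exists i.
  by rewrite inE => /top[j jSz Bij]; exists j.
have sigma_inj : {in T &, injective sigma}.
  move=> i1 i2 /sigma_top[_ B1] /sigma_top[_ B2] s12.
  by apply: top_row_unique B1 _; rewrite s12.
have SzT : Sz = T.
  apply/eqP; rewrite eqEcard Sz_sub -(card_in_imset sigma_inj) subset_leq_card //.
  by apply/fintype.subsetP => _ /imsetP[i iT ->]; case: (sigma_top i iT).
pose pi i := if i \in T then sigma i else i.
have pi_inj : injective pi.
  move=> i1 i2; rewrite /pi.
  case: (boolP (i1 \in T)) => i1T; case: (boolP (i2 \in T)) => i2T //.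
  - exact: sigma_inj.
  - by move=> e; have := (sigma_top _ i1T).1; rewrite SzT e (negbTE i2T).
  - by move=> e; have := (sigma_top _ i2T).1; rewrite SzT -e (negbTE i1T).
split=> //; exists (perm pi_inj) => i; rewrite permE /pi mxE.
case: (boolP (i \in T)) => iT; last by rewrite (negbTE iT) eqxx.
by have [sT Bs] := sigma_top i iT; rewrite -SzT sT.
Qed.

Lemma mixed_submx_sol_gt0 T (s : 'S_n) : (forall i, mixed_submx T id i (s i) = 1) ->
  exists2 x : 'cV[R]_n, mixed_submx T id *m x = const_mx 1 & forall i, 0 < x i 0.
Proof.
move=> mixed_perm1; set A := mixed_submx T id.
have A_ge0 i j : 0 <= A i j by rewrite mxE; case: ifP => _; rewrite ?B_ge0 ?ler0n.
have A_offdiag_lt1 i : \sum_(j | j != s i) A i j < 1.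
  have := mixed_submx_dominance (fun k1 k2 _ _ => id) mixed_perm1 i.
  by rewrite (bigD1 (s i)) //= mixed_perm1; lra.
pose x : 'cV[R]_n := invmx A *m const_mx 1.
have Ax1 : A *m x = const_mx 1.
  by rewrite mulKVmx // (perm_dominant_unitmx A_ge0 mixed_perm1 A_offdiag_lt1).
by exists x; last exact: perm_dominant_sol_gt0 Ax1.
Qed.

Lemma complement_NECP_sol (T : {set 'I_n}) (s : 'S_n) :
  (exists j, j \in T) -> (forall i, mixed_submx T id i (s i) = 1) ->
  exists w z : 'cV[R]_n, NECP_sol M q w z /\ supp w = ~: T /\ supp z = T.
Proof.
move=> [j0 j0T] /mixed_submx_sol_gt0[x Ax1 x_gt0].
pose z := \col_j (if j \in T then x j 0 / u j else 0).
have z_neq0 j : (z j 0 != 0) = (j \in T).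
  by rewrite mxE; case: ifP => _; rewrite ?eqxx // mulf_neq0 ?invr_eq0 ?gt_eqF ?u_gt0.
have uz j : u j * z j 0 = (j \in T)%:R * x j 0.
  by rewrite mxE; case: ifP => _; rewrite ?mulr0 ?mul0r // mul1r mulrC divfK ?gt_eqF ?u_gt0.
have wE i : (M *m z + q) i 0 = q i 0 * ((i \notin T)%:R * x i 0).
  have rowA : \sum_(k in T) B i k * x k 0 + (i \notin T)%:R * x i 0 = 1.
    rewrite -(mixed_submx_mulmx T id (fun k => x k 0)).
    by have /matrixP/(_ i 0) := Ax1; rewrite !mxE.
  have sumE : \sum_j B i j * (u j * z j 0) = \sum_(k in T) B i k * x k 0.
    rewrite (bigID (fun j => j \in T)) /= [X in _ + X]big1 ?addr0 => [|j jT].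
      by apply: eq_bigr => j jT; rewrite uz jT mul1r.
    by rewrite uz (negbTE jT) mul0r mulr0.
  by rewrite NECP_residual sumE -{1}rowA addrAC subrr add0r.
exists (M *m z + q), z; split; last split.
- split=> //.
  + apply: big1 => i _; rewrite wE; case: (boolP (i \in T)) => iT /=.
      by rewrite mul0r mulr0 mul0r.
    by have := z_neq0 i; rewrite (negbTE iT) => /negbFE/eqP ->; rewrite mulr0.
  + by apply: contraTneq j0T => z0; rewrite -z_neq0 z0 mxE eqxx.
  + by move=> i; rewrite wE pmulr_rge0 ?q_gt0 // mulr_ge0 ?ler0n // ltW ?x_gt0.
  + by move=> j; rewrite mxE; case: ifP => _ //; rewrite divr_ge0 // ltW ?x_gt0 ?u_gt0.
- apply/setP => i; rewrite !inE wE mulf_eq0 gt_eqF ?q_gt0 //= mulf_eq0.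
  by rewrite (gt_eqF (x_gt0 i)) orbF pnatr_eq0 eqb0 negbK.
- by apply/setP => j; rewrite inE z_neq0.
Qed.

Lemma NECP_supports_admissible Sw Sz :
  (exists w z : 'cV[R]_n, NECP_sol M q w z /\ supp w = Sw /\ supp z = Sz) <->
  admissible Sw Sz.
Proof.
split=> [[w [z [sol [<- <-]]]]|adm]; first exact: NECP_sol_admissible.
have [SzE [s mixed_perm1]] := admissible_perm adm.
have [Sz_neq0 _ _] := adm.
have [|w [z [sol [wE zE]]]] := complement_NECP_sol _ mixed_perm1; first by rewrite -SzE.
by exists w, z; rewrite wE zE SzE finset.setCK.
Qed.

Lemma B_eq1_col_max i j : (forall i', a i' j <= a i j) -> B i j = 1.
Proof.
move=> a_max; apply/eqP; rewrite B_eq1 eq_le a_le_u /=.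
exact: bigmax_le (a_ge0 i j) (fun i' _ => a_max i').
Qed.

Lemma maxtimes_sol_admissible (w z : 'cV[R]_n) :
  maxtimes_sol (- M) q w z -> admissible (supp w) (supp z).
Proof.
case=> wz_ge0 rows comp [j0 zj0].
have w_ge0 i := (wz_ge0 i).1; have z_ge0 i := (wz_ge0 i).2.
have Mz_ge0 i j : 0 <= (- M) i j * z j 0 by rewrite mxE mulr_ge0 ?oppr_ge0.
have Mz_le i j : - M i j * z j 0 <= q i 0.
  rewrite -(rows i) le_max; apply/orP; right.
  by have := le_bigmax 0 (fun k => (- M) i k * z k 0) j; rewrite mxE.
split.
- by exists j0; rewrite inE.
- apply/fintype.subsetP => j; rewrite !inE negbK => zj.
  have wz0 : w j 0 * z j 0 = 0.
    apply/le_anti; rewrite mulr_ge0 // andbT -comp.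
    exact: (le_bigmax _ (fun i => w i 0 * z i 0)).
  by move/eqP: wz0; rewrite mulf_eq0 (negbTE zj) orbF.
move=> i; rewrite inE negbK => /eqP wi0.
have := rows i; rewrite wi0 (max_idPr (bigmax_ge_id _ _ _ _)).
have [j _ ->] := eq_bigmax j0 xpredT _ erefl (fun j _ => Mz_ge0 i j).
rewrite mxE => Mzij.
have zj_gt0 : 0 < z j 0.
  rewrite lt0r z_ge0 andbT; apply: contraTneq (q_gt0 i) => zj_eq0.
  by rewrite -Mzij zj_eq0 mulr0 ltxx.
exists j; first by rewrite inE gt_eqF.
apply: B_eq1_col_max => i'; rewrite -(ler_pM2r zj_gt0) /a.
rewrite [X in _ <= X]mulrAC Mzij divff ?gt_eqF // mulrAC ler_pdivrMr // mul1r.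
exact: Mz_le.
Qed.

Lemma admissible_maxtimes_sol Sw Sz : admissible Sw Sz ->
  exists w z : 'cV[R]_n, maxtimes_sol (- M) q w z /\ supp w = Sw /\ supp z = Sz.
Proof.
case=> Sz_neq0 Sz_sub top.
pose w := \col_i (if i \in Sw then q i 0 else 0).
pose z := \col_j (if j \in Sz then (u j)^-1 else 0).
have Mz i j : (- M) i j * z j 0 = q i 0 * (if j \in Sz then B i j else 0).
  rewrite !mxE; case: ifP => _; last by rewrite !mulr0.
  have := u_gt0 j; have := q_gt0 i => qi_gt0 uj_gt0.
  by rewrite /B /a; field; rewrite !gt_eqF.
have row_le i : \big[Num.max/0]_j ((- M) i j * z j 0) <= q i 0.
  apply: bigmax_le => [|j _]; first exact: ltW.
  by rewrite Mz ler_piMr ?(ltW (q_gt0 i)) //; case: ifP => _; rewrite ?B_le1 ?ler01.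
exists w, z; split; [split|split].
- move=> i; rewrite !mxE; split; case: ifP => _; rewrite ?lexx //.
    exact: ltW.
  by rewrite invr_ge0 ltW ?u_gt0.
- move=> i; rewrite mxE; case: ifP => iSw; first exact/max_idPl/row_le.
  rewrite (max_idPr (bigmax_ge_id _ _ _ _)); apply/le_anti; rewrite row_le /=.
  have [j jSz Bij] := top i (negbT iSw).
  by apply: le_trans (le_bigmax _ _ j); rewrite Mz jSz Bij mulr1.
- apply/le_anti; rewrite bigmax_ge_id andbT; apply: bigmax_le => // i _.
  rewrite !mxE; case: ifP => iSw; case: ifP => iSz; rewrite ?mulr0 ?mul0r ?lexx //.
  by move/fintype.subsetP: Sz_sub => /(_ i iSz); rewrite inE iSw.
- by have [j jSz] := Sz_neq0; exists j; rewrite mxE jSz invr_eq0 gt_eqF ?u_gt0.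
- by apply/setP => i; rewrite !inE mxE; case: ifP; rewrite ?eqxx ?gt_eqF ?q_gt0.
- by apply/setP => j; rewrite !inE mxE; case: ifP; rewrite ?eqxx ?invr_eq0 ?gt_eqF ?u_gt0.
Qed.

Lemma maxtimes_supports_admissible Sw Sz :
  (exists w z : 'cV[R]_n, maxtimes_sol (- M) q w z /\ supp w = Sw /\ supp z = Sz) <->
  admissible Sw Sz.
Proof.
split=> [[w [z [sol [<- <-]]]]|]; first exact: maxtimes_sol_admissible.
exact: admissible_maxtimes_sol.
Qed.

End NECPInstance.

Unset Implicit Arguments.

Theorem theorem1p4 (R : realType) (n : nat) (M : 'M[R]_n) (q : 'cV[R]_n)
  (HMle0 : forall i j, M i j <= 0)
  (HMcol : forall j, exists i, M i j < 0)
  (Hq : forall i, 0 < q i 0)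
  (Hdom : NECP_dominance M q) :
  forall Sw Sz : {set 'I_n},
    (exists w z : 'cV[R]_n, NECP_sol M q w z /\ supp w = Sw /\ supp z = Sz) <->
    (exists w z : 'I_n -> \bar R,
        TNECP_sol (fun i j => Tlog (- M i j)) (fun i => Tlog (q i 0)) w z
        /\ tsupp w = Sw /\ tsupp z = Sz).
Proof.
move=> Sw Sz.
have -> : (fun i j => Tlog (- M i j)) = (fun i j => Tlog ((- M) i j)).
  by apply/funext => i; apply/funext => j; rewrite mxE.
apply: iff_trans (NECP_supports_admissible HMle0 HMcol Hq Hdom Sw Sz) _.
apply: iff_sym; apply: iff_trans (TNECP_supports_maxtimes _ _ _ _) _.
- by move=> i j; rewrite mxE oppr_ge0.
- by move=> i; apply: ltW.
exact: maxtimes_supports_admissible.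
Qed.
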